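(* Let $A,B$ be two sets of size $r$, and let $\sigma:A\to B$ be a uniformly random bijection. Let $A_1,\dots,A_k\subseteq A'\subseteq A$ and $B_1,\dots,B_k\subseteq B'\subseteq B$. Then the function $$t\mapsto P\left[\bigwedge_{i=1}^k\left[\sigma(A_i)\neq B_i\right]\ \Bigm|\ |\sigma(A')\setminus B'|=t\right]$$ is nondecreasing in $t$ (over those $t$ for which the conditioning event has nonzero probability).
   Context: $\sigma(A_i)$ denotes the image set $\{\sigma(a):a\in A_i\}$. *)

From mathcomp Require Import all_boot all_order all_algebra.
Set Implicit Arguments. Unset Strict Implicit. Unset Printing Implicit Defensive.
Import Order.TTheory GRing.Theory Num.Theory.
Local Open Scope ring_scope.

Definition is_bij (A B : finType) (f : {ffun A -> B}) : bool :=
  injectiveb f && [forall b : B, exists a : A, f a == b].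

(* The sample space: all bijections A -> B (uniform measure = counting). *)
Definition bijs (A B : finType) : {set {ffun A -> B}} := [set f | is_bij f].

Definition avoid_event (A B : finType) (k : nat)
  (As : 'I_k -> {set A}) (Bs : 'I_k -> {set B}) : {set {ffun A -> B}} :=
  [set f in bijs A B | [forall i : 'I_k, f @: As i != Bs i]].

Definition cond_event (A B : finType) (A' : {set A}) (B' : {set B}) (t : nat)
  : {set {ffun A -> B}} :=
  [set f in bijs A B | #|(f @: A') :\: B'| == t].

Definition cond_prob (A B : finType) (E C : {set {ffun A -> B}}) : rat :=
  (#|E :&: C|%:R / #|C|%:R)%R.

(* Say that a bijection sigma has level t when |sigma(A') \ B'| = t.  Transposing
   the images of a point x of A' with sigma(x) in B' and a point y outside A' with
   sigma(y) outside B' raises the level by one; it is a bijection between such triples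
   (sigma, x, y) at level t and the triples at level t + 1 in which x in A' is mapped
   outside B' and y outside A' is mapped into B'.  The number of admissible pairs
   (x, y) only depends on the level, so this double count relates the sizes of two
   consecutive levels.  Since A_i is contained in A' and B_i in B', the transposition
   sends bijections with sigma(A_i) <> B_i for all i to bijections with the same
   property, so restricting the count to them yields an inequality, which says
   exactly that the conditional probability does not decrease from t to t + 1. *)

From mathcomp Require Import all_boot all_order all_algebra perm zify.
Import Order.TTheory GRing.Theory Num.Theory.
Set Implicit Arguments. Unset Strict Implicit. Unset Printing Implicit Defensive.

Lemma card_dep_pairs_const (I J : finType) (E : {set I}) (Z : I -> {set J}) n :
  {in E, forall i, #|Z i| = n} ->
  #|[set p : I * J | (p.1 \in E) && (p.2 \in Z p.1)]| = #|E| * n.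
Proof.
move=> cardZ; rewrite -sum_nat_const -(eq_bigr _ cardZ).
under [RHS]eq_bigr do rewrite -sum1_card.
by rewrite pair_big_dep -sum1_card; apply: eq_bigl => p; rewrite inE.
Qed.

Lemma leq_mul_cross (a b c d u v : nat) :
  c * u = d * v -> a * u <= b * v -> 0 < v -> a * d <= b * c.
Proof.
move=> eq_cd le_ab v_gt0; rewrite -(leq_pmul2r v_gt0) -mulnA -eq_cd.
by rewrite mulnCA [b * c]mulnC -mulnA leq_mul2l le_ab orbT.
Qed.

Section Bijections.

Variables A B : finType.
Implicit Types (f : {ffun A -> B}) (x y z : A).

Lemma is_bij_inj f : is_bij f -> injective f.
Proof. by case/andP => /injectiveP. Qed.

Lemma is_bij_surj f b : is_bij f -> exists a, f a = b.
Proof. by case/andP => _ /forallP/(_ b)/existsP[a /eqP]; exists a. Qed.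

Lemma card_preimset_bij f (C : {set B}) : is_bij f -> #|f @^-1: C| = #|C|.
Proof.
move=> bij_f; rewrite -(card_imset _ (is_bij_inj bij_f)); apply: eq_card => b.
apply/imsetP/idP => [[a] | Cb]; first by rewrite inE => Cfa ->.
by have [a fa] := is_bij_surj b bij_f; exists a; rewrite // inE fa.
Qed.

Definition swapf f x y : {ffun A -> B} := [ffun z => f (tperm x y z)].

Lemma swapfK f x y : swapf (swapf f x y) x y = f.
Proof. by apply/ffunP => z; rewrite !ffunE tpermK. Qed.

Lemma swapfL f x y : swapf f x y x = f y.
Proof. by rewrite ffunE tpermL. Qed.

Lemma swapfR f x y : swapf f x y y = f x.
Proof. by rewrite ffunE tpermR. Qed.

Lemma swapfD f x y z : z != x -> z != y -> swapf f x y z = f z.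
Proof. by move=> zx zy; rewrite ffunE tpermD // eq_sym. Qed.

Lemma is_bij_swapf f x y : is_bij (swapf f x y) = is_bij f.
Proof.
suff bij_swap g : is_bij g -> is_bij (swapf g x y).
  by apply/idP/idP => [/bij_swap | /bij_swap //]; rewrite swapfK.
move=> bij_g; apply/andP; split.
  by apply/injectiveP => u v; rewrite !ffunE => /(is_bij_inj bij_g)/perm_inj.
apply/forallP => b; have [a ga] := is_bij_surj b bij_g.
by apply/existsP; exists (tperm x y a); rewrite ffunE tpermK ga.
Qed.

End Bijections.

Section Levels.

Variables (A B : finType) (A' : {set A}) (B' : {set B}).
Implicit Types (f : {ffun A -> B}) (E : {set {ffun A -> B}}).
Implicit Types (X Y : {ffun A -> B} -> {set A}).

Definition stay f := A' :&: f @^-1: B'.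
Definition escape f := A' :&: f @^-1: ~: B'.
Definition enter f := ~: A' :&: f @^-1: B'.
Definition away f := ~: A' :&: f @^-1: ~: B'.

Lemma cond_eventE f t :
  (f \in cond_event A' B' t) = is_bij f && (#|escape f| == t).
Proof.
rewrite !inE; apply: andb_id2l => bij_f.
rewrite -(card_imset _ (is_bij_inj bij_f)); congr (_ == t); apply: eq_card => b.
rewrite !inE; apply/andP/imsetP => [[nB'b /imsetP[a A'a fa]] | [a]].
  by exists a; rewrite // !inE A'a -fa.
by rewrite !inE => /andP[A'a nB'fa] ->; split; last exact: imset_f.
Qed.

Lemma card_stay_escape f : #|stay f| + #|escape f| = #|A'|.
Proof. by rewrite /escape preimsetC -setDE cardsID. Qed.

Lemma card_stay_enter f : is_bij f -> #|stay f| + #|enter f| = #|B'|.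
Proof.
by move=> bij_f; rewrite /stay /enter !(setIC _ (f @^-1: _)) -setDE cardsID card_preimset_bij.
Qed.

Lemma card_escape_away f : is_bij f -> #|escape f| + #|away f| = #|~: B'|.
Proof.
by move=> bij_f; rewrite /escape /away !(setIC _ (f @^-1: _)) -setDE cardsID card_preimset_bij.
Qed.

Lemma cond_event_gt0_bounds t : 0 < #|cond_event A' B' t| ->
  [/\ t <= #|A'|, t <= #|~: B'| & #|A'| <= #|B'| + t].
Proof.
rewrite card_gt0 => /set0Pn[f]; rewrite cond_eventE => /andP[bij_f /eqP <-].
have A'E := card_stay_escape f; have B'E := card_stay_enter bij_f.
have nB'E := card_escape_away bij_f; by split; lia.
Qed.

Lemma card_escape_swapf f x y : x \in stay f -> y \in away f ->
  #|escape (swapf f x y)| = #|escape f|.+1.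
Proof.
rewrite !inE => /andP[A'x B'fx] /andP[nA'y nB'fy].
suff -> : escape (swapf f x y) = x |: escape f by rewrite cardsU1 !inE A'x B'fx.
apply/setP => z; rewrite !inE.
have [-> | zx] := eqVneq z x; first by rewrite swapfL A'x.
have [-> | zy] := eqVneq z y; first by rewrite (negPf nA'y).
by rewrite swapfD.
Qed.

Lemma swapf_stay_away f x y : x \in stay f -> y \in away f ->
  x \in escape (swapf f x y) /\ y \in enter (swapf f x y).
Proof. by rewrite !inE swapfL swapfR => /andP[-> ->] /andP[-> ->]. Qed.

Lemma swapf_escape_enter f x y : x \in escape f -> y \in enter f ->
  x \in stay (swapf f x y) /\ y \in away (swapf f x y).
Proof. by rewrite !inE swapfL swapfR => /andP[-> ->] /andP[-> ->]. Qed.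

Lemma cond_event_swapf f x y t : x \in stay f -> y \in away f ->
  (swapf f x y \in cond_event A' B' t.+1) = (f \in cond_event A' B' t).
Proof.
by move=> xf yf; rewrite !cond_eventE is_bij_swapf card_escape_swapf.
Qed.

Definition swap_move (p : {ffun A -> B} * (A * A)) := (swapf p.1 p.2.1 p.2.2, p.2).

Lemma swap_moveK : involutive swap_move.
Proof. by case=> f [x y]; rewrite /swap_move /= swapfK. Qed.

Definition moves E X Y :=
  [set p : {ffun A -> B} * (A * A) | (p.1 \in E) && (p.2 \in setX (X p.1) (Y p.1))].

Lemma card_moves E X Y n : {in E, forall f, #|X f| * #|Y f| = n} ->
  #|moves E X Y| = #|E| * n.
Proof.
move=> cardXY; apply: (card_dep_pairs_const (Z := fun f => setX (X f) (Y f))).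
by move=> f /cardXY <-; rewrite cardsX.
Qed.

Lemma card_moves_swap_le E E' X Y X' Y' :
    (forall f x y, f \in E -> x \in X f -> y \in Y f ->
       [/\ swapf f x y \in E', x \in X' (swapf f x y) & y \in Y' (swapf f x y)]) ->
  #|moves E X Y| <= #|moves E' X' Y'|.
Proof.
move=> swapE; rewrite -[#|moves E' _ _|](card_preimset _ (can_inj swap_moveK)).
apply/subset_leq_card/subsetP => -[f [x y]]; rewrite !inE /= => /and3P[Ef Xx Yy].
by have [-> -> ->] := swapE f x y Ef Xx Yy.
Qed.

Lemma card_moves_up E t : E \subset cond_event A' B' t ->
  #|moves E stay away| = #|E| * ((#|A'| - t) * (#|~: B'| - t)).
Proof.
move=> /subsetP sub_E; apply: card_moves => f /sub_E; rewrite cond_eventE.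
case/andP=> bij_f /eqP <-.
by rewrite -(card_stay_escape f) addnK -(card_escape_away bij_f) addKn.
Qed.

Lemma card_moves_down E t : E \subset cond_event A' B' t.+1 ->
  #|moves E escape enter| = #|E| * (t.+1 * (#|B'| - (#|A'| - t.+1))).
Proof.
move=> /subsetP sub_E; apply: card_moves => f /sub_E; rewrite cond_eventE.
case/andP=> bij_f /eqP <-.
by rewrite -(card_stay_escape f) addnK -(card_stay_enter bij_f) addKn.
Qed.

Lemma card_cond_event_succ t :
  #|cond_event A' B' t| * ((#|A'| - t) * (#|~: B'| - t))
  = #|cond_event A' B' t.+1| * (t.+1 * (#|B'| - (#|A'| - t.+1))).
Proof.
rewrite -card_moves_up // -card_moves_down //; apply/eqP; rewrite eqn_leq.
apply/andP; split; apply: card_moves_swap_le => f x y Ef xf yf.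
  by have [] := swapf_stay_away xf yf; rewrite cond_event_swapf.
have [xg yg] := swapf_escape_enter xf yf.
by rewrite -(cond_event_swapf _ xg yg) swapfK.
Qed.

Lemma cond_event_succ_gt0 t : 0 < #|cond_event A' B' t| ->
  t < #|A'| -> t < #|~: B'| -> 0 < #|cond_event A' B' t.+1|.
Proof.
move=> N_gt0 ltA' ltB'.
have : 0 < #|cond_event A' B' t| * ((#|A'| - t) * (#|~: B'| - t)).
  by rewrite !muln_gt0 N_gt0 !subn_gt0 ltA' ltB'.
by rewrite card_cond_event_succ muln_gt0 => /andP[].
Qed.

Lemma cond_event_gt0_between i j k :
  0 < #|cond_event A' B' i| -> 0 < #|cond_event A' B' j| -> i < k < j ->
  0 < #|cond_event A' B' k|.
Proof.
move=> Ni_gt0 /cond_event_gt0_bounds[leA' leB' _].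
elim: k => [|k IHk] /andP[ik kj] //.
have Nk_gt0 : 0 < #|cond_event A' B' k|.
  by have [<- // | neq_ik] := eqVneq i k; apply: IHk; lia.
by apply: (cond_event_succ_gt0 Nk_gt0); lia.
Qed.

End Levels.

Lemma cond_prob_le_cross (A B : finType) (E C1 C2 : {set {ffun A -> B}}) :
  0 < #|C1| -> 0 < #|C2| -> #|E :&: C1| * #|C2| <= #|E :&: C2| * #|C1| ->
  (cond_prob E C1 <= cond_prob E C2)%R.
Proof.
move=> C1_gt0 C2_gt0 le_cross; rewrite /cond_prob ler_pdivrMr ?ltr0n //.
by rewrite mulrAC ler_pdivlMr ?ltr0n // -!natrM ler_nat.
Qed.

Section Avoidance.

Variables (A B : finType) (k : nat) (As : 'I_k -> {set A}) (Bs : 'I_k -> {set B}).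
Variables (A' : {set A}) (B' : {set B}).
Hypotheses (sub_As : forall i, As i \subset A') (sub_Bs : forall i, Bs i \subset B').

Lemma avoid_event_swapf (f : {ffun A -> B}) (x y : A) : x \in A' -> y \in away A' B' f ->
  f \in avoid_event As Bs -> swapf f x y \in avoid_event As Bs.
Proof.
rewrite !inE => A'x /andP[nA'y nB'fy] /andP[bij_f /forallP avoid_f].
rewrite is_bij_swapf bij_f; apply/forallP => i; apply: contra (avoid_f i) => /eqP img.
rewrite -img; apply/eqP/eq_in_imset => z Asz.
have A'z := subsetP (sub_As i) z Asz.
have zy : z != y by apply: contraNneq nA'y => <-.
have zx : z != x.
  have /(subsetP (sub_Bs i)) : swapf f x y z \in Bs i by rewrite -img imset_f.
  by apply: contraTneq => ->; rewrite swapfL.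
by rewrite swapfD.
Qed.

Lemma card_avoid_cond_event_succ t :
  #|avoid_event As Bs :&: cond_event A' B' t| * ((#|A'| - t) * (#|~: B'| - t))
  <= #|avoid_event As Bs :&: cond_event A' B' t.+1| * (t.+1 * (#|B'| - (#|A'| - t.+1))).
Proof.
rewrite -card_moves_up ?subsetIr // -card_moves_down ?subsetIr //.
apply: card_moves_swap_le => f x y; rewrite inE => /andP[avoid_f Cf] xf yf.
have [xg yg] := swapf_stay_away xf yf; split=> //.
rewrite inE cond_event_swapf // Cf andbT; apply: avoid_event_swapf yf avoid_f.
by move: xf; rewrite inE => /andP[].
Qed.

Lemma cond_prob_avoid_succ t :
  0 < #|cond_event A' B' t| -> 0 < #|cond_event A' B' t.+1| ->
  (cond_prob (avoid_event As Bs) (cond_event A' B' t)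
    <= cond_prob (avoid_event As Bs) (cond_event A' B' t.+1))%R.
Proof.
move=> Nt_gt0 Nt1_gt0; apply: cond_prob_le_cross => //.
apply: leq_mul_cross (card_cond_event_succ A' B' t) (card_avoid_cond_event_succ t) _.
have [_ _ bound_t] := cond_event_gt0_bounds Nt_gt0.
have [bound_t1 _ _] := cond_event_gt0_bounds Nt1_gt0.
by rewrite muln_gt0 subn_gt0; lia.
Qed.

End Avoidance.

Local Open Scope ring_scope.

Theorem lemma4 (A B : finType) (r k : nat) (HA : #|A| = r) (HB : #|B| = r)
  (As : 'I_k -> {set A}) (Bs : 'I_k -> {set B}) (A' : {set A}) (B' : {set B})
  (hAs : forall i, As i \subset A') (hBs : forall i, Bs i \subset B')
  (t1 t2 : nat) :
  (t1 <= t2)%N ->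
  (0 < #|cond_event A' B' t1|)%N -> (0 < #|cond_event A' B' t2|)%N ->
  cond_prob (avoid_event As Bs) (cond_event A' B' t1)
    <= cond_prob (avoid_event As Bs) (cond_event A' B' t2).
Proof.
move=> le_t12 N1_gt0 N2_gt0.
apply: (@homo_leq_in _ [pred t | 0 < #|cond_event A' B' t|]%N
  (fun t => cond_prob (avoid_event As Bs) (cond_event A' B' t)) <=%R) => //.
- exact: le_trans.
- by move=> i j Ni_gt0 Nj_gt0 m; apply: cond_event_gt0_between.
- exact: cond_prob_avoid_succ.
Qed.
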